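(* Let $A,B$ be idempotent torsion-free $\Gamma$-graded rings and let $F:A\text{-gr}\to B\text{-gr}$, $G:B\text{-gr}\to A\text{-gr}$ be inverse graded category equivalences. Set $P=G(B)$, $Q=F(A)$ (with right actions $p\cdot b=G(\rho_b)(p)$, $q\cdot a=F(\rho_a)(q)$) and let $(A,B,P,Q,\langle-,-\rangle,[-,-])$ be a graded Morita context on these bimodules with surjective trace maps. If $M\in A\text{-gr}$ is faithful, then the left $B$-module $B\cdot\mathrm{HOM}_A(P,M)$ is faithful.
   Context: $\Gamma$ is a fixed multiplicative group with identity $e$. Rings are associative $\Gamma$-graded, not necessarily unital; $A$ is idempotent if $A^2=A$ and torsion-free if $Aa=0\Rightarrow a=0$ and $aA=0\Rightarrow a=0$. $A\text{-gr}$: unital ($AM=M$), torsion-free ($Am=0\Rightarrow m=0$) graded left $A$-modules with degree-preserving maps. A graded functor is an additive functor commuting with suspensions ($M(\sigma)_\tau=M_{\tau\sigma}$); a graded category equivalence is a graded functor which is an equivalence. $F$ induces maps on graded homomorphisms of any degree via $\mathrm{HOM}_A(M,N)_\sigma=\mathrm{Hom}_{A\text{-gr}}(M(\sigma^{-1}),N)$, where a left-linear map is graded of degree $\sigma$ if $f(M_\tau)\subseteq N_{\tau\sigma}$; $\rho_a$ is right multiplication by $a$. $\mathrm{HOM}_A(P,M)$ is a left $B$-module via $(bf)(p)=f(pb)$ and $B\cdot\mathrm{HOM}_A(P,M)$ denotes finite sums $\sum b_if_i$. A graded Morita context: bimodules ${}_AP_B$, ${}_BQ_A$ unital on both sides,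 degree-$e$ graded bimodule maps $P\otimes_BQ\to A$, $p\otimes q\mapsto\langle p,q\rangle$, $Q\otimes_AP\to B$, $q\otimes p\mapsto[q,p]$, with $p'[q,p]=\langle p',q\rangle p$ and $q'\langle p,q\rangle=[q',p]q$. A module $M$ over a ring $R$ is faithful if $rM=0$ implies $r=0$. *)

From HB Require Import structures.
From mathcomp Require Import all_boot all_order all_algebra.

Set Implicit Arguments.
Unset Strict Implicit.
Unset Printing Implicit Defensive.

Import GRing.Theory.
Local Open Scope ring_scope.

Section GradedDefs.

Variable Gam : groupType.

(* h : Gam -> V -> Prop is a grading of the abelian group V, i.e.
   V = (+)_sigma V_sigma with V_sigma = {x | h sigma x}. *)
Definition is_grading (V : zmodType) (h : Gam -> V -> Prop) : Prop :=
  [/\ (forall s, h s 0 /\ (forall x y, h s x -> h s y -> h s (x - y))),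
      (forall x : V, exists l : seq (Gam * V),
          [/\ uniq (map fst l), (forall p, p \in l -> h p.1 p.2)
            & x = \sum_(p <- l) p.2])
    & (forall l : seq (Gam * V), uniq (map fst l) ->
          (forall p, p \in l -> h p.1 p.2) -> \sum_(p <- l) p.2 = 0 ->
          forall p, p \in l -> p.2 = 0)].

Record grring := GrRing {
  rcar :> zmodType;
  rmul : rcar -> rcar -> rcar;
  rmulA : forall x y z, rmul x (rmul y z) = rmul (rmul x y) z;
  rmulDl : forall x y z, rmul (x + y) z = rmul x z + rmul y z;
  rmulDr : forall x y z, rmul x (y + z) = rmul x y + rmul x z;
  rhom : Gam -> rcar -> Prop;
  rhom_grading : is_grading rhom;
  rhom_mul : forall s t x y, rhom s x -> rhom t y -> rhom (s * t)%g (rmul x y)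
}.

Definition idempotent_ring (A : grring) : Prop :=
  forall x : A, exists l : seq (A * A), x = \sum_(p <- l) rmul p.1 p.2.

Definition torsion_free (A : grring) : Prop :=
  (forall a : A, (forall x : A, rmul x a = 0) -> a = 0) /\
  (forall a : A, (forall x : A, rmul a x = 0) -> a = 0).

(* objects of A-gr: unital, torsion-free graded left A-modules *)
Record grmod (A : grring) := GrMod {
  mcar :> zmodType;
  act : A -> mcar -> mcar;
  actDl : forall a b m, act (a + b) m = act a m + act b m;
  actDr : forall a m n, act a (m + n) = act a m + act a n;
  actA : forall a b m, act (rmul a b) m = act a (act b m);
  mhom : Gam -> mcar -> Prop;
  mhom_grading : is_grading mhom;
  mhom_act : forall s t a m, rhom s a -> mhom t m -> mhom (s * t)%g (act a m);
  munital : forall m, exists l : seq (A * mcar), m = \sum_(p <- l) act p.1 p.2;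
  mtf : forall m, (forall a, act a m = 0) -> m = 0
}.
Arguments mhom {A} g _ _.

Definition is_gmap (A : grring) (M N : grmod A) (s : Gam) (f : M -> N) : Prop :=
  [/\ (forall x y, f (x + y) = f x + f y),
      (forall a m, f (act a m) = act a (f m))
    & (forall t m, mhom M t m -> mhom N (t * s)%g (f m))].
Arguments is_gmap {A} M N s f.

Record ghom (A : grring) (M N : grmod A) := GHom {
  ghfun :> M -> N;
  ghfunP : is_gmap M N 1%g ghfun
}.

Lemma grading_shift (V : zmodType) (h : Gam -> V -> Prop) (s : Gam) :
  is_grading h -> is_grading (fun t => h (t * s)%g).
Proof.
case=> h0 hex hind; split.
- by move=> t; exact: h0.
- move=> x; have [l [ul hl ->]] := hex x.
  exists (map (fun p => (p.1 * s^-1, p.2)%g) l); split.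
  + rewrite -map_comp (map_comp (fun t => t * s^-1)%g fst).
    by rewrite map_inj_uniq //; exact: mulIg.
  + move=> p /mapP [q ql ->] /=; rewrite mulgVK; exact: hl.
  + by rewrite big_map.
- move=> l ul hl s0 p pl.
  have := hind (map (fun p => (p.1 * s, p.2)%g) l).
  rewrite -map_comp (map_comp (fun t => t * s)%g fst) map_inj_uniq; last first.
    exact: mulIg.
  move=> /(_ ul); rewrite big_map => /(_ _ s0 (p.1 * s, p.2)%g) /=.
  apply; first by move=> q /mapP [r rl ->]; exact: hl.
  by apply/mapP; exists p.
Qed.

Definition susp (A : grring) (s : Gam) (M : grmod A) : grmod A.
Proof.
refine (@GrMod A M (@act A M) (@actDl A M) (@actDr A M) (@actA A M)
          (fun t => mhom M (t * s)%g) (grading_shift s (mhom_grading M)) _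
          (@munital A M) (@mtf A M)).
by move=> t u a m ha hm; rewrite -mulgA; exact: mhom_act.
Defined.

Definition regmod (A : grring) (Hi : idempotent_ring A) (Ht : torsion_free A) :
  grmod A :=
  @GrMod A A (@rmul A) (@rmulDl A) (@rmulDr A)
    (fun a b m => esym (@rmulA A a b m)) (@rhom A) (rhom_grading A)
    (@rhom_mul A) Hi (proj1 Ht).

Definition cast_dom (A : grring) (X X' Y : grmod A) (e : X = X')
  (f : ghom X Y) : ghom X' Y :=
  match e in _ = Z return ghom Z Y with erefl => f end.

Definition cast_cod (A : grring) (X Y Y' : grmod A) (e : Y = Y')
  (f : ghom X Y) : ghom X Y' :=
  match e in _ = Z return ghom X Z with erefl => f end.

(* graded functors A-gr -> B-gr: additive functors commuting (strictly) with
   suspensions, F(M(s)) = F(M)(s) and F(f(s)) = F(f)(s). *)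
Record gfunctor (A B : grring) := GFunctor {
  fobj :> grmod A -> grmod B;
  fmap : forall M N : grmod A, ghom M N -> ghom (fobj M) (fobj N);
  fmap_id : forall (M : grmod A) (f : ghom M M),
      (forall m, f m = m) -> forall m, fmap f m = m;
  fmap_comp : forall (M N L : grmod A) (f : ghom M N) (g : ghom N L)
      (h : ghom M L), (forall m, h m = g (f m)) ->
      forall m, fmap h m = fmap g (fmap f m);
  fmap_add : forall (M N : grmod A) (f g h : ghom M N),
      (forall m, h m = f m + g m) -> forall m, fmap h m = fmap f m + fmap g m;
  fobj_susp : forall (s : Gam) (M : grmod A),
      fobj (susp s M) = susp s (fobj M);
  fmap_susp : forall (s : Gam) (M N : grmod A) (f : ghom M N)
      (g : ghom (susp s M) (susp s N)), (forall m, g m = f m) ->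
      forall m : fobj M,
        cast_cod (fobj_susp s N) (cast_dom (fobj_susp s M) (fmap g)) m
        = fmap f m
}.

(* action of a graded functor on graded maps of degree s, using
   HOM(M,N)_s = Hom_{A-gr}(M(s^-1), N) *)
Definition fmapdeg (A B : grring) (F : gfunctor A B) (s : Gam) (M N : grmod A)
  (f : ghom (susp s^-1 M) N) : ghom (susp s^-1 (F M)) (F N) :=
  cast_dom (fobj_susp F s^-1 M) (fmap F f).

Definition inverse_equivalences (A B : grring) (F : gfunctor A B)
  (G : gfunctor B A) : Prop :=
  (exists eta : forall M : grmod A, ghom M (G (F M)),
     (forall M, bijective (eta M)) /\
     (forall (M N : grmod A) (f : ghom M N) m,
        eta N (f m) = fmap G (fmap F f) (eta M m))) /\
  (exists eps : forall N : grmod B, ghom N (F (G N)),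
     (forall N, bijective (eps N)) /\
     (forall (N N' : grmod B) (f : ghom N N') n,
        eps N' (f n) = fmap F (fmap G f) (eps N n))).

(* a graded Morita context (A, B, P, Q, <-,->, [-,-]) where P is a left
   A-module with right B-action rP and Q a left B-module with right
   A-action rQ *)
Definition morita_context (A B : grring) (P : grmod A) (Q : grmod B)
  (rP : P -> B -> P) (rQ : Q -> A -> Q)
  (pa : P -> Q -> A) (pb : Q -> P -> B) : Prop :=
  [/\
   [/\ (forall p p' b, rP (p + p') b = rP p b + rP p' b),
       (forall p b b', rP p (b + b') = rP p b + rP p b'),
       (forall p b b', rP (rP p b) b' = rP p (rmul b b')),
       (forall a p b, act a (rP p b) = rP (act a p) b)
     &
       (forall s t p b, mhom P s p -> rhom t b -> mhom P (s * t)%g (rP p b))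
       /\ (forall p, exists l : seq (P * B), p = \sum_(x <- l) rP x.1 x.2)],
   [/\ (forall q q' a, rQ (q + q') a = rQ q a + rQ q' a),
       (forall q a a', rQ q (a + a') = rQ q a + rQ q a'),
       (forall q a a', rQ (rQ q a) a' = rQ q (rmul a a')),
       (forall b q a, act b (rQ q a) = rQ (act b q) a)
     &
       (forall s t q a, mhom Q s q -> rhom t a -> mhom Q (s * t)%g (rQ q a))
       /\ (forall q, exists l : seq (Q * A), q = \sum_(x <- l) rQ x.1 x.2)],
   (* <-,-> : P (x)_B Q -> A, degree-e graded A-bimodule map *)
   [/\ (forall p p' q, pa (p + p') q = pa p q + pa p' q),
       (forall p q q', pa p (q + q') = pa p q + pa p q'),
       (forall p b q, pa (rP p b) q = pa p (act b q)),
       (forall a p q, pa (act a p) q = rmul a (pa p q))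
     &
       (forall p q a, pa p (rQ q a) = rmul (pa p q) a)
       /\ (forall s t p q, mhom P s p -> mhom Q t q -> rhom (s * t)%g (pa p q))],
   (* [-,-] : Q (x)_A P -> B, degree-e graded B-bimodule map *)
   [/\ (forall q q' p, pb (q + q') p = pb q p + pb q' p),
       (forall q p p', pb q (p + p') = pb q p + pb q p'),
       (forall q a p, pb (rQ q a) p = pb q (act a p)),
       (forall b q p, pb (act b q) p = rmul b (pb q p))
     &
       (forall q p b, pb q (rP p b) = rmul (pb q p) b)
       /\ (forall s t q p, mhom Q s q -> mhom P t p -> rhom (s * t)%g (pb q p))]
 &
   (forall p' q p, rP p' (pb q p) = act (pa p' q) p) /\
   (forall q' p q, rQ q' (pa p q) = act (pb q' p) q)].

Definition surjective_traces (A B : grring) (P : grmod A) (Q : grmod B)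
  (pa : P -> Q -> A) (pb : Q -> P -> B) : Prop :=
  (forall a : A, exists l : seq (P * Q), a = \sum_(x <- l) pa x.1 x.2) /\
  (forall b : B, exists l : seq (Q * P), b = \sum_(x <- l) pb x.1 x.2).

Definition faithful (A : grring) (M : grmod A) : Prop :=
  forall a : A, (forall m : M, act a m = 0) -> a = 0.

Record gmapd (A : grring) (M N : grmod A) := GMapD {
  gdeg : Gam;
  gfun :> M -> N;
  gfunP : is_gmap M N gdeg gfun
}.

(* HOM_A(M,N) = (+)_s HOM_A(M,N)_s : finite sums of graded maps *)
Definition in_HOM (A : grring) (M N : grmod A) (f : M -> N) : Prop :=
  exists l : seq (gmapd M N), forall m, f m = \sum_(g <- l) g m.

(* B . HOM_A(P,M): finite sums sum_i b_i f_i with f_i in HOM_A(P,M), where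
   (b f)(p) = f(p b) *)
Definition in_BHOM (A B : grring) (P M : grmod A) (rP : P -> B -> P)
  (X : P -> M) : Prop :=
  exists n (b : 'I_n -> B) (f : 'I_n -> P -> M),
    (forall i, in_HOM (f i)) /\ (forall p, X p = \sum_(i < n) f i (rP p (b i))).

(* B . HOM_A(P,M) is a faithful left B-module, the action being
   (b X)(p) = X(p b) *)
Definition BHOM_faithful (A B : grring) (P M : grmod A) (rP : P -> B -> P)
  : Prop :=
  forall b : B,
    (forall X : P -> M, in_BHOM rP X -> forall p, X (rP p b) = 0) -> b = 0.

End GradedDefs.

From HB Require Import structures.
From mathcomp Require Import all_boot all_order all_algebra.
Import GRing.Theory.
Local Open Scope ring_scope.

Set Implicit Arguments.
Unset Strict Implicit.
Unset Printing Implicit Defensive.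

(* Suppose b kills B.HOM_A(P,M).  For q in Q and m in M the map p |-> <p,q>m
   lies in HOM_A(P,M), so testing b against b' . (p |-> <p,q>m) shows that
   <P, (b b')q> annihilates the faithful module M, i.e. <P, (b b')q> = 0.
   Since [Q,P] = B and Q is torsion-free, [q',p](b b')q = q'<p,(b b')q> = 0
   forces (b b')q = 0; unitality of Q then gives bQ = 0, and finally
   b[q,p] = [bq,p] = 0 with [Q,P] = B and B torsion-free gives b = 0. *)

Lemma morph_add0 (V W : zmodType) (f : V -> W) :
  {morph f : x y / x + y} -> f 0 = 0.
Proof. by move=> fD; apply: (addrI (f 0)); rewrite -fD !addr0. Qed.

Lemma morph_add_sum (V W : zmodType) (f : V -> W) (I : Type) (r : seq I)
  (F : I -> V) :
  {morph f : x y / x + y} -> f (\sum_(i <- r) F i) = \sum_(i <- r) f (F i).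
Proof. by move=> fD; rewrite (big_morph f fD (morph_add0 fD)). Qed.

Section GradedModules.
Variables (Gam : groupType) (A : grring Gam).

Lemma act_eq0_of_mulr (N : grmod A) (a : A) :
  (forall a' (n : N), act (rmul a a') n = 0) -> forall n : N, act a n = 0.
Proof.
move=> aa'0 n; have [l ->] := munital n.
rewrite (morph_add_sum _ _ (actDr a)); apply: big1 => x _.
by rewrite -actA aa'0.
Qed.

Variables M N : grmod A.

Lemma in_HOM_ext (f g : M -> N) : f =1 g -> in_HOM f -> in_HOM g.
Proof. by move=> fg [l fl]; exists l => m; rewrite -fg fl. Qed.

Lemma gmap_in_HOM s (f : M -> N) : is_gmap s f -> in_HOM f.
Proof. by move=> fP; exists [:: GMapD fP] => m; rewrite big_seq1. Qed.

Lemma in_HOM_sum (I : eqType) (r : seq I) (f : I -> M -> N) :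
  (forall i, i \in r -> in_HOM (f i)) ->
  in_HOM (fun m => \sum_(i <- r) f i m).
Proof.
elim: r => [|i r IHr] fr; first by exists [::] => m; rewrite !big_nil.
have [l1 fl1] := fr i (mem_head i r).
have [l2 fl2] : in_HOM (fun m => \sum_(j <- r) f j m).
  by apply: IHr => j jr; apply: fr; rewrite inE jr orbT.
by exists (l1 ++ l2) => m; rewrite big_cons big_cat /= fl1 fl2.
Qed.

End GradedModules.

Section Pairing.
Variables (Gam : groupType) (A B : grring Gam) (P M : grmod A) (Q : grmod B).
Variable pa : P -> Q -> A.
Hypotheses (paDl : forall p p' q, pa (p + p') q = pa p q + pa p' q)
           (paDr : forall p q q', pa p (q + q') = pa p q + pa p q')
           (pa_actl : forall a p q, pa (act a p) q = rmul a (pa p q))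
           (pa_hom : forall s t (p : P) (q : Q),
              mhom s p -> mhom t q -> rhom (s * t)%g (pa p q)).

Lemma pairing_act_gmap s t (q : Q) (m : M) :
  mhom s q -> mhom t m -> is_gmap (s * t)%g (fun p : P => act (pa p q) m).
Proof.
move=> qs mt; split=> [p p'|a p|u p pu]; first by rewrite paDl actDl.
  by rewrite pa_actl actA.
by rewrite mulgA; apply: mhom_act => //; apply: pa_hom.
Qed.

Lemma pairing_act_in_HOM q (m : M) : in_HOM (fun p => act (pa p q) m).
Proof.
have [_ splitQ _] := mhom_grading Q; have [_ splitM _] := mhom_grading M.
have [lq [_ lqP ->]] := splitQ q; have [lm [_ lmP ->]] := splitM m.
apply: (@in_HOM_ext _ _ _ _
  (fun p => \sum_(x <- lq) \sum_(y <- lm) act (pa p x.2) y.2)).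
  move=> p; rewrite (morph_add_sum _ _ (paDr p)).
  rewrite (morph_add_sum _ _ (fun a a' => actDl a a' _)).
  by apply: eq_bigr => x _; rewrite (morph_add_sum _ _ (actDr _)).
apply: in_HOM_sum => x xq; apply: in_HOM_sum => y ym.
exact: gmap_in_HOM (pairing_act_gmap (lqP x xq) (lmP y ym)).
Qed.

End Pairing.

Section MoritaContext.
Variables (Gam : groupType) (A B : grring Gam) (P : grmod A) (Q : grmod B).
Variables (rP : P -> B -> P) (rQ : Q -> A -> Q).
Variables (pa : P -> Q -> A) (pb : Q -> P -> B).
Hypothesis morita : morita_context rP rQ pa pb.
Hypothesis pb_onto :
  forall b : B, exists l : seq (Q * P), b = \sum_(x <- l) pb x.1 x.2.

Lemma BHOM_annihilator_pa (M : grmod A) (b : B) :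
  (forall X : P -> M, in_BHOM rP X -> forall p, X (rP p b) = 0) ->
  forall b' q p (m : M), act (pa p (act (rmul b b') q)) m = 0.
Proof.
move=> annih b' q p m.
have [[_ _ rP_mul _ _] _ [paDl paDr pa_rP pa_actl [_ pa_hom]] _ _] := morita.
rewrite -pa_rP -rP_mul; apply: (annih (fun p => act (pa (rP p b') q) m)).
exists 1%N, (fun=> b'), (fun _ p => act (pa p q) m); split.
  by move=> _; apply: (pairing_act_in_HOM paDl paDr pa_actl pa_hom).
by move=> p'; rewrite big_ord1.
Qed.

Lemma morita_pa_kernel0 q : (forall p, pa p q = 0) -> q = 0.
Proof.
move=> paq0; apply: mtf => c; have [l ->] := pb_onto c.
rewrite (morph_add_sum _ _ (fun x y => actDl x y q)); apply: big1 => x _.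
have [_ [_ rQD _ _ _] _ _ [_ rQ_pa]] := morita.
by rewrite -rQ_pa paq0 (morph_add0 (rQD x.1)).
Qed.

Lemma morita_faithful : torsion_free B -> faithful Q.
Proof.
move=> [_ tfB] b bQ0; apply: tfB => y; have [l ->] := pb_onto y.
rewrite (morph_add_sum _ _ (rmulDr b)); apply: big1 => x _.
have [_ _ _ [pbDl _ _ pb_actl _] _] := morita.
by rewrite -pb_actl bQ0 (morph_add0 (fun q q' => pbDl q q' x.2)).
Qed.

End MoritaContext.

Theorem lemma7p4 (Gam : groupType) (A B : grring Gam)
  (HiA : idempotent_ring A) (HtA : torsion_free A)
  (HiB : idempotent_ring B) (HtB : torsion_free B)
  (F : gfunctor A B) (G : gfunctor B A)
  (HFG : inverse_equivalences F G)
  (* P = G(B) with p . b = G(rho_b)(p);  Q = F(A) with q . a = F(rho_a)(q) *)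
  (rP : G (regmod HiB HtB) -> B -> G (regmod HiB HtB))
  (rQ : F (regmod HiA HtA) -> A -> F (regmod HiA HtA))
  (HrP : forall (s : Gam) (b : B), rhom s b ->
     forall rho : ghom (susp s^-1 (regmod HiB HtB)) (regmod HiB HtB),
       (forall x, rho x = rmul x b) ->
       forall p, rP p b = @fmapdeg Gam B A G s _ _ rho p)
  (HrQ : forall (s : Gam) (a : A), rhom s a ->
     forall rho : ghom (susp s^-1 (regmod HiA HtA)) (regmod HiA HtA),
       (forall x, rho x = rmul x a) ->
       forall q, rQ q a = @fmapdeg Gam A B F s _ _ rho q)
  (pa : G (regmod HiB HtB) -> F (regmod HiA HtA) -> A)
  (pb : F (regmod HiA HtA) -> G (regmod HiB HtB) -> B)
  (HMor : morita_context rP rQ pa pb)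
  (Htr : surjective_traces pa pb)
  (M : grmod A) (HMf : faithful M) :
  @BHOM_faithful Gam A B (G (regmod HiB HtB)) M rP.
Proof.
case: Htr => _ pb_onto b annih_b.
apply: (morita_faithful HMor pb_onto HtB) => q.
apply: act_eq0_of_mulr => {q} b' q.
apply: (morita_pa_kernel0 HMor pb_onto) => p.
apply: HMf => m.
exact: (BHOM_annihilator_pa HMor annih_b).
Qed.
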